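(* Let $k$ be a field and $d,m$ integers with $d\ge 3$, $m\ge 3d-2$ and $(m-1)!\ne 0$ in $k$. Let $Y\subseteq k$ be a subset of cardinality $d$ such that the set of differences $Y-Y=\{y_1-y_2: y_1,y_2\in Y\}$ has cardinality $1+2\binom d2$. Let $V\subseteq k[\beta]$ be the $k$-subspace containing $(\beta^m)$ with $V/(\beta^m)=\sum_{y\in Y}k\,(e^{y\beta}\bmod\beta^m)$. Then there is no nonzero differential operator $\Theta=A(\beta)+B(\beta)\frac{d}{d\beta}$ with $A,B\in(\beta)$ (i.e. $A(0)=B(0)=0$) and $\deg A,\deg B<m$ such that $\Theta(V)\subseteq V$.
   Context: $k[\beta]$ is the polynomial ring; $e^{y\beta}\bmod\beta^m$ denotes the class of $\sum_{\nu=0}^{m-1}\frac{y^\nu}{\nu!}\beta^\nu$ in $k[\beta]/(\beta^m)$. A differential operator $A+B\frac{d}{d\beta}$ acts on $k[\beta]$ by $v\mapsto Av+Bv'$. *)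

From HB Require Import structures.
From mathcomp Require Import all_boot all_order all_algebra.
Set Implicit Arguments. Unset Strict Implicit. Unset Printing Implicit Defensive.
Import GRing.Theory.
Local Open Scope ring_scope.

(* e^{y beta} mod beta^m, represented by its canonical truncation of degree < m *)
Definition expTrunc (k : fieldType) (m : nat) (y : k) : {poly k} :=
  \sum_(i < m) ((y ^+ i) / (i`!)%:R) *: 'X^i.

Definition inV (k : fieldType) (m : nat) (Y : seq k) (v : {poly k}) : Prop :=
  exists (c : k -> k) (q : {poly k}),
    v = \sum_(y <- Y) c y *: expTrunc m y + q * 'X^m.

Definition diffOp (k : fieldType) (A B v : {poly k}) : {poly k} :=
  A * v + B * v^`().

(* Since B(0) = 0, the operator maps e^{yβ} to (A + yB) e^{yβ} modulo β^m, so
   invariance of V says that for each y in Y the polynomial F_y := A + yB is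
   congruent to some combination Σ_z c_y(z) e^{(z-y)β}.  As F_y is affine in y,
   (y2-y3) F_{y1} + (y3-y1) F_{y2} + (y1-y2) F_{y3} = 0 for distinct y1, y2, y3.
   The exponents z - y_i take at most 3d - 2 <= m values, and truncated
   exponentials with at most m distinct exponents are linearly independent
   (pair with a polynomial vanishing at all exponents but one).  Because the
   nonzero differences of Y are pairwise distinct, an exponent z0 - y1 with
   z0 <> y1 occurs only once, so c_{y1}(z0) = 0.  Hence F_{y1} is congruent to
   the constant F_{y1}(0) = 0, and two such y1 give A = B = 0. *)

From mathcomp Require Import all_boot all_order all_algebra.
From mathcomp Require Import ring zify.
Set Implicit Arguments.
Unset Strict Implicit.
Unset Printing Implicit Defensive.

Import GRing.Theory.
Local Open Scope ring_scope.

Lemma natr_fact_neq0 (R : idomainType) (i n : nat) :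
  (i <= n)%N -> n`!%:R != 0 :> R -> i`!%:R != 0 :> R.
Proof. by move=> /fact_split ->; rewrite natrM mulf_eq0 negb_or => /andP[]. Qed.

Lemma take_polyMl (R : nzRingType) (m : nat) (p q : {poly R}) :
  take_poly m (take_poly m p * q) = take_poly m (p * q).
Proof.
apply/polyP => i; rewrite !coef_take_poly; case: ifP => // ltim.
rewrite !coefM; apply: eq_bigr => j _.
by rewrite coef_take_poly (leq_ltn_trans (leq_ord j) ltim).
Qed.

Lemma take_polyMr (R : nzRingType) (m : nat) (p q : {poly R}) :
  take_poly m (p * take_poly m q) = take_poly m (p * q).
Proof.
apply/polyP => i; rewrite !coef_take_poly; case: ifP => // ltim.
rewrite !coefM; apply: eq_bigr => j _.
by rewrite coef_take_poly (leq_ltn_trans (leq_subr j i) ltim).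
Qed.

Lemma take_poly1_eq0 (R : nzRingType) (p : {poly R}) : p`_0 = 0 -> take_poly 1 p = 0.
Proof. by move=> p0; apply/polyP => -[|i]; rewrite coef_take_poly coef0. Qed.

Lemma mul_drop_polyX (R : nzRingType) (p : {poly R}) : p`_0 = 0 -> drop_poly 1 p * 'X = p.
Proof.
by move=> p0; rewrite -[RHS](poly_take_drop 1) take_poly1_eq0 // add0r expr1.
Qed.

Lemma take_polyMX (R : comNzRingType) (m : nat) (p q : {poly R}) :
  take_poly m (p * 'X * q) = take_poly m (p * 'X * take_poly m.-1 q).
Proof.
have XA r : p * 'X * r = p * r * 'X^1 by rewrite expr1 mulrAC.
by rewrite !XA !take_polyMXn subn1 take_polyMr.
Qed.

Lemma uniq_map_inj_in (T1 T2 : eqType) (f : T1 -> T2) (s : seq T1) :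
  uniq (map f s) -> {in s &, injective f}.
Proof.
elim: s => [//|a s IH] /= /andP[fa_s us] x y.
rewrite !in_cons => /orP[/eqP -> | xs] /orP[/eqP -> | ys] // fxy.
- by move: fa_s; rewrite fxy map_f.
- by move: fa_s; rewrite -fxy map_f.
- exact: IH.
Qed.

Section Differences.
Variable R : zmodType.
Implicit Types Y ys : seq R.

Lemma mem_diffs_rem Y ys : uniq Y ->
  {subset [seq z - y | y <- ys, z <- Y] <= 0 :: [seq z - y | y <- ys, z <- rem y Y]}.
Proof.
move=> uY _ /allpairsP[[y z] [yys zY ->]] /=.
rewrite in_cons; have [-> | zNy] := eqVneq z y; first by rewrite subrr eqxx.
apply/orP; right; apply/allpairsPdep; exists y, z.
by rewrite (mem_rem_uniq _ uY) inE zNy.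
Qed.

Lemma size_diffs_rem Y ys : uniq Y -> {subset ys <= Y} ->
  size [seq z - y | y <- ys, z <- rem y Y] = (size ys * (size Y).-1)%N.
Proof.
move=> uY; rewrite size_allpairs_dep.
elim: ys => [//|y ys IH] ysY /=; rewrite size_rem ?ysY ?mem_head // IH // => u uys.
by apply: ysY; rewrite in_cons uys orbT.
Qed.

Lemma size_undup_diffs Y ys : uniq Y -> {subset ys <= Y} ->
  (size (undup [seq (z - y)%R | y <- ys, z <- Y]) <= 1 + size ys * (size Y).-1)%N.
Proof.
move=> uY ysY; rewrite -(size_diffs_rem uY ysY) add1n.
apply: (uniq_leq_size (s2 := 0 :: _) (undup_uniq _)) => x; rewrite mem_undup.
exact: mem_diffs_rem.
Qed.

Lemma distinct_differences_inj Y a b c e : uniq Y ->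
  size (undup [seq y1 - y2 | y1 <- Y, y2 <- Y]) = (1 + size Y * (size Y).-1)%N ->
  a \in Y -> b \in Y -> c \in Y -> e \in Y ->
  a != b -> a - b = c - e -> (a, b) = (c, e).
Proof.
move=> uY hdiff aY bY cY eY aNb abce.
have cNe : c != e by apply: contraNneq aNb => ce; rewrite -subr_eq0 abce ce subrr.
pose T := [seq (y, z) | y <- Y, z <- rem y Y].
have inT y z : y \in Y -> z \in Y -> z != y -> (y, z) \in T.
  move=> yY zY zNy; apply/allpairsPdep; exists y, z.
  by rewrite (mem_rem_uniq _ uY) inE zNy.
have : uniq (0 :: [seq z - y | y <- Y, z <- rem y Y]).
  apply: leq_size_uniq (undup_uniq [seq y1 - y2 | y1 <- Y, y2 <- Y]) _ _.
    move=> x; rewrite mem_undup => /allpairsP[[y1 y2] [y1Y y2Y ->]] /=.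
    by apply: mem_diffs_rem uY _ _; apply/allpairsP; exists (y2, y1).
  by rewrite hdiff /= size_diffs_rem // add1n.
have -> : [seq z - y | y <- Y, z <- rem y Y] = map (fun p => p.2 - p.1) T.
  by rewrite map_allpairs.
move=> /= /andP[_ uT].
by have /= [-> ->] := uniq_map_inj_in uT (inT _ _ bY aY aNb) (inT _ _ eY cY cNe) abce.
Qed.

Lemma distinct_differences_neq Y y1 z0 y z : uniq Y ->
  size (undup [seq y1 - y2 | y1 <- Y, y2 <- Y]) = (1 + size Y * (size Y).-1)%N ->
  y1 \in Y -> z0 \in Y -> y \in Y -> z \in Y ->
  z0 != y1 -> y != y1 -> z - y != z0 - y1.
Proof.
move=> uY hdiff y1Y z0Y yY zY z0N yN; apply/eqP => zyz0.
have [zy | zNy] := eqVneq z y.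
  by move: zyz0; rewrite zy subrr => /esym/eqP; rewrite subr_eq0 (negbTE z0N).
have [_ yy1] := distinct_differences_inj uY hdiff zY yY z0Y y1Y zNy zyz0.
by rewrite yy1 eqxx in yN.
Qed.

End Differences.

Section TruncatedExponential.
Variable k : fieldType.
Implicit Types (m n : nat) (x y : k).

Lemma expTrunc_poly m y : expTrunc m y = \poly_(i < m) (y ^+ i / i`!%:R).
Proof. by rewrite poly_def. Qed.

Lemma coef_expTrunc m y i :
  (expTrunc m y)`_i = if (i < m)%N then y ^+ i / i`!%:R else 0.
Proof. by rewrite expTrunc_poly coef_poly. Qed.

Lemma take_expTrunc m n y : (n <= m)%N -> take_poly n (expTrunc m y) = expTrunc n y.
Proof.
move=> lenm; apply/polyP => i; rewrite coef_take_poly !coef_expTrunc.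
by case: (ltnP i n) => // ltin; rewrite (leq_trans ltin lenm).
Qed.

Lemma expTrunc0 m : expTrunc m (0 : k) = take_poly m 1.
Proof.
apply/polyP => i; rewrite coef_expTrunc coef_take_poly coefC.
by case: ifP => // _; case: i => [|i]; rewrite ?fact0 ?divr1 // expr0n mul0r.
Qed.

Lemma take_inV m Y v : inV m Y v ->
  exists c : k -> k, take_poly m v = \sum_(y <- Y) c y *: expTrunc m y.
Proof.
move=> [c [q ->]]; exists c.
rewrite linearD /= take_polyMXn_0 addr0 linear_sum; apply: eq_bigr => y _.
by rewrite linearZ /= take_expTrunc.
Qed.

Lemma inV_expTrunc m Y y : uniq Y -> y \in Y -> inV m Y (expTrunc m y).
Proof.
move=> uY yY; exists (fun z => (z == y)%:R), 0; rewrite mul0r addr0.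
rewrite (bigD1_seq y yY uY) /= eqxx scale1r big1 ?addr0 // => z /negbTE ->.
by rewrite scale0r.
Qed.

Variable m : nat.
Hypothesis fact_m_neq0 : (m.-1)`!%:R != 0 :> k.

Lemma fact_neq0 i : (i < m)%N -> i`!%:R != 0 :> k.
Proof. by move=> ltim; apply: natr_fact_neq0 fact_m_neq0; lia. Qed.

Lemma expTruncD x y : take_poly m (expTrunc m x * expTrunc m y) = expTrunc m (x + y).
Proof.
apply/polyP => j; rewrite coef_take_poly coef_expTrunc; case: ifP => // ltjm.
rewrite coefM addrC exprDn mulr_suml; apply: eq_bigr => [[i /=]]; rewrite ltnS => leij _.
have ltim : (i < m)%N by lia.
have ltjim : (j - i < m)%N by lia.
rewrite !coef_expTrunc ltim ltjim -(bin_fact leij) !natrM -mulr_natr.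
have := fact_neq0 ltjm; rewrite -(bin_fact leij) !natrM !mulf_eq0 !negb_or.
move=> /and3P[binF iF jiF]; field.
by rewrite binF iF jiF.
Qed.

Lemma deriv_expTrunc y : (expTrunc m y)^`() = y *: expTrunc m.-1 y.
Proof.
apply/polyP => i; rewrite coef_deriv coefZ !coef_expTrunc.
have -> : (i.+1 < m)%N = (i < m.-1)%N by lia.
case: ifP => [ltim | _]; last by rewrite mul0rn mulr0.
have : (i.+1)`!%:R != 0 :> k by apply: fact_neq0; lia.
rewrite factS natrM mulf_eq0 negb_or => /andP[iS iF].
by rewrite -mulr_natr exprS; field; rewrite iF addrC natr1 iS.
Qed.

Lemma take_diffOp_expTrunc (A B : {poly k}) y : B`_0 = 0 ->
  take_poly m (diffOp A B (expTrunc m y)) = take_poly m ((A + y *: B) * expTrunc m y).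
Proof.
move=> B0; rewrite /diffOp deriv_expTrunc mulrDl !linearD /=; congr (_ + _).
rewrite -scalerAr -scalerAl !linearZ /=; congr (_ *: _).
by rewrite -(mul_drop_polyX B0) [RHS]take_polyMX take_expTrunc ?leq_pred.
Qed.

Lemma take_stable_expansion (Y : seq k) (A B : {poly k}) y :
  uniq Y -> B`_0 = 0 -> (forall v, inV m Y v -> inV m Y (diffOp A B v)) ->
  y \in Y ->
  exists c : k -> k, take_poly m (A + y *: B) = \sum_(z <- Y) c z *: expTrunc m (z - y).
Proof.
move=> uY B0 stable yY.
have [c ec] := take_inV (stable _ (inV_expTrunc m uY yY)).
exists c.
(* A + yB = (A + yB) e^{yβ} e^{-yβ} modulo β^m. *)
have e0 : take_poly m 1 = expTrunc m (y - y) by rewrite subrr expTrunc0.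
rewrite -[A + _]mulr1 -take_polyMr e0 -expTruncD take_polyMr mulrA -take_polyMl.
rewrite -take_diffOp_expTrunc // ec mulr_suml linear_sum; apply: eq_bigr => z _.
by rewrite -scalerAl linearZ /= expTruncD.
Qed.

Lemma expTrunc_combination_eq0 (I : eqType) (r : seq I) (a f : I -> k) :
  (size (undup (map f r)) <= m)%N ->
  take_poly m (\sum_(i <- r) a i *: expTrunc m (f i)) = 0 ->
  forall x, \sum_(i <- r | f i == x) a i = 0.
Proof.
move=> size_r r0 x.
have [xr | xNr] := boolP (x \in map f r); last first.
  by rewrite big1_seq // => i /andP[/eqP fi_x ir]; case/negP: xNr; rewrite -fi_x map_f.
pose P := \prod_(u <- [seq u <- undup (map f r) | u != x]) ('X - u%:P).
have sizeP : (size P <= m)%N.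
  rewrite size_prod_XsubC size_filter; apply: leq_trans size_r.
  have := count_predC (fun u => u != x) (undup (map f r)).
  have : (0 < count (predC (fun u => u != x)) (undup (map f r)))%N.
    by rewrite -has_count; apply/hasP; exists x; rewrite ?mem_undup //= eqxx.
  lia.
have pairing y : \sum_(j < m) P`_j * (j`!%:R * (expTrunc m y)`_j) = P.[y].
  rewrite (horner_coef_wide _ sizeP); apply: eq_bigr => j _.
  by rewrite coef_expTrunc ltn_ord [_ * (_ / _)]mulrC divfK ?fact_neq0.
have pair_sum : \sum_(j < m) P`_j * (j`!%:R * (\sum_(i <- r) a i *: expTrunc m (f i))`_j)
    = \sum_(i <- r) a i * P.[f i].
  under eq_bigr do rewrite coef_sum !mulr_sumr.
  rewrite exchange_big /=; apply: eq_bigr => i _.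
  by rewrite -pairing mulr_sumr; apply: eq_bigr => j _; rewrite coefZ; ring.
have : \sum_(i <- r) a i * P.[f i] = 0.
  rewrite -pair_sum big1 // => j _; have := congr1 (fun p : {poly k} => p`_j) r0.
  by rewrite /= coef_take_poly ltn_ord coef0 => ->; rewrite !mulr0.
rewrite (bigID (fun i => f i == x)) /= [X in _ + X]big1_seq ?addr0; last first.
  move=> i /andP[fi_x ir]; apply/eqP; rewrite mulf_eq0; apply/orP; right.
  by rewrite -/(root _ _) root_prod_XsubC mem_filter fi_x mem_undup map_f.
rewrite (eq_bigr (fun i => a i * P.[x])) => [|i /eqP -> //].
rewrite -mulr_suml => /eqP; rewrite mulf_eq0 => /orP[/eqP // |].
by rewrite -/(root _ _) root_prod_XsubC mem_filter eqxx.
Qed.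

End TruncatedExponential.

Lemma uniq_three_distinct (T : eqType) (s : seq T) : uniq s -> (3 <= size s)%N ->
  exists a b c, [/\ a \in s, b \in s & c \in s] /\ [/\ a != b, a != c & b != c].
Proof.
case: s => [|a [|b [|c s]]] //= /and3P[]; rewrite !inE !negb_or.
move=> /and3P[ab ac _] /andP[bc _] _ _.
by exists a, b, c; rewrite !inE !eqxx !orbT.
Qed.

Section StableOperator.
Variables (k : fieldType) (m : nat) (Y : seq k) (A B : {poly k}).
Hypotheses (fact_m_neq0 : (m.-1)`!%:R != 0 :> k) (uY : uniq Y).
Hypothesis distinct_diffs :
  size (undup [seq y1 - y2 | y1 <- Y, y2 <- Y]) = (1 + size Y * (size Y).-1)%N.
Hypothesis size_Y_m : (1 + 3 * (size Y).-1 <= m)%N.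
Hypotheses (A0 : A`_0 = 0) (B0 : B`_0 = 0).
Hypothesis stable : forall v, inV m Y v -> inV m Y (diffOp A B v).

Lemma take_affine_eq0 y1 y2 y3 : y1 \in Y -> y2 \in Y -> y3 \in Y ->
  y1 != y2 -> y1 != y3 -> y2 != y3 -> take_poly m (A + y1 *: B) = 0.
Proof.
move=> y1Y y2Y y3Y n12 n13 n23.
have [c1 e1] := take_stable_expansion fact_m_neq0 uY B0 stable y1Y.
have [c2 e2] := take_stable_expansion fact_m_neq0 uY B0 stable y2Y.
have [c3 e3] := take_stable_expansion fact_m_neq0 uY B0 stable y3Y.
have c1_off z0 : z0 \in Y -> z0 != y1 -> c1 z0 = 0.
  move=> z0Y z0N.
  pose r := [seq ((y2 - y3) * c1 z, z - y1) | z <- Y] ++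
            [seq ((y3 - y1) * c2 z, z - y2) | z <- Y] ++
            [seq ((y1 - y2) * c3 z, z - y3) | z <- Y].
  have size_r : (size (undup (map snd r)) <= m)%N.
    have -> : map snd r = [seq z - y | y <- [:: y1; y2; y3], z <- Y].
      by rewrite !map_cat -!map_comp /= cats0.
    apply: (leq_trans (size_undup_diffs (ys := [:: y1; y2; y3]) uY _) size_Y_m).
    by move=> y; rewrite !inE => /or3P[] /eqP ->.
  have r0 : take_poly m (\sum_(p <- r) p.1 *: expTrunc m p.2) = 0.
    have scale_sum (l : k) (c : k -> k) y : \sum_(z <- Y) (l * c z) *: expTrunc m (z - y)
        = l *: \sum_(z <- Y) c z *: expTrunc m (z - y).
      by rewrite scaler_sumr; apply: eq_bigr => z _; rewrite scalerA.
    rewrite !big_cat !big_map /= !scale_sum -e1 -e2 -e3 -!linearZ -!linearD /=.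
    have -> : (y2 - y3) *: (A + y1 *: B) +
        ((y3 - y1) *: (A + y2 *: B) + (y1 - y2) *: (A + y3 *: B)) = 0.
      by rewrite -!mul_polyC !rmorphB /=; ring.
    by rewrite !linear0.
  have := expTrunc_combination_eq0 fact_m_neq0 size_r r0 (z0 - y1).
  rewrite !big_cat !big_map /= (eq_bigl (pred1 z0)) => [|z]; last first.
    by rewrite /= (inj_eq (addIr _)).
  rewrite -big_filter filter_pred1_uniq // big_seq1 !big1_seq ?addr0.
  - by move/eqP; rewrite mulf_eq0 subr_eq0 (negbTE n23) => /eqP.
  - move=> z /andP[zy zY]; rewrite eq_sym in n13.
    by case/negP: (distinct_differences_neq uY distinct_diffs y1Y z0Y y3Y zY z0N n13).
  - move=> z /andP[zy zY]; rewrite eq_sym in n12.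
    by case/negP: (distinct_differences_neq uY distinct_diffs y1Y z0Y y2Y zY z0N n12).
have e1' : take_poly m (A + y1 *: B) = c1 y1 *: take_poly m 1.
  rewrite e1 (bigD1_seq y1 y1Y uY) /= subrr expTrunc0 big1_seq ?addr0 //.
  by move=> z /andP[zN zY]; rewrite c1_off ?scale0r.
have m_gt0 : (0 < m)%N by apply: leq_trans size_Y_m.
rewrite e1'; have := congr1 (fun p : {poly k} => p`_0) e1'.
rewrite /= !(coefZ, coef_take_poly, coefD, coefC) m_gt0 A0 B0 mulr0 addr0 mulr1.
by move=> <-; rewrite scale0r.
Qed.

End StableOperator.

Theorem mainTheorem13 (k : fieldType) (d m : nat) (Y : seq k)
  (hd : (3 <= d)%N) (hm : (3 * d - 2 <= m)%N)
  (hfact : ((m.-1)`!)%:R != 0 :> k)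
  (hY : uniq Y) (hYd : size Y = d)
  (hdiff : size (undup [seq y1 - y2 | y1 <- Y, y2 <- Y]) = (1 + 2 * 'C(d, 2))%N) :
  ~ (exists A B : {poly k},
        ((A != 0) || (B != 0)) /\
        A`_0 = 0 /\ B`_0 = 0 /\
        (size A <= m)%N /\ (size B <= m)%N /\
        (forall v, inV m Y v -> inV m Y (diffOp A B v))).
Proof.
move=> [A [B [AB_neq0 [A0 [B0 [sA [sB stable]]]]]]].
have diffs : size (undup [seq y1 - y2 | y1 <- Y, y2 <- Y]) = (1 + size Y * (size Y).-1)%N.
  by rewrite hdiff hYd -mul_bin_diag bin1.
have size_Y_m : (1 + 3 * (size Y).-1 <= m)%N by rewrite hYd; lia.
have [a [b [c [[aY bY cY] [ab ac bc]]]]] : exists a b c,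
    [/\ a \in Y, b \in Y & c \in Y] /\ [/\ a != b, a != c & b != c].
  by apply: uniq_three_distinct; rewrite ?hYd.
have Fa := take_affine_eq0 hfact hY diffs size_Y_m A0 B0 stable aY bY cY ab ac bc.
have ba : b != a by rewrite eq_sym.
have Fb := take_affine_eq0 hfact hY diffs size_Y_m A0 B0 stable bY aY cY ba bc ac.
have B_eq0 : B = 0.
  have : take_poly m ((a - b) *: B) = 0.
    have -> : (a - b) *: B = (A + a *: B) - (A + b *: B).
      by rewrite scalerBl opprD addrACA subrr add0r.
    by rewrite linearB /= Fa Fb subrr.
  rewrite linearZ /= take_poly_id // => /eqP.
  by rewrite scaler_eq0 subr_eq0 (negbTE ab) => /eqP.
have A_eq0 : A = 0 by move: Fa; rewrite B_eq0 scaler0 addr0 take_poly_id.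
by move: AB_neq0; rewrite A_eq0 B_eq0 eqxx.
Qed.
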